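(* Let $\gamma_k=\frac{\gamma_0}{(k+1)^a}$ and $\lambda_k=\frac{\lambda_0}{(k+1)^b}$ for $k\ge0$, where $a,b,\gamma_0,\lambda_0$ are positive scalars with $\gamma_0\lambda_0\le 2m/\mu_h$, and let $r<1$. Let $\{x_k\}$ and $\{\bar x_N\}$ be generated by the IR-IG method with these sequences and averaging parameter $r$. If $a>b$, $a>0.5$, $a+b<1$ and $ar\le1$, then $\bar x_N\to x_h^*$ as $N\to\infty$.
   Context: Standing setup: $X\subset\mathbb{R}^n$ is nonempty, compact and convex. $f_1,\dots,f_m:\mathbb{R}^n\to\mathbb{R}$ are convex (possibly nondifferentiable) functions and $f=\sum_{i=1}^m f_i$. $h:\mathbb{R}^n\to\mathbb{R}$ is strongly convex with parameter $\mu_h>0$ (possibly nondifferentiable). Let $X^*=\arg\min_{x\in X}f(x)$ and let $x_h^*$ be the unique minimizer of $h$ over $X^*$. $\mathcal{P}_X$ denotes Euclidean projection onto $X$. IR-IG method: given $x_0\in X$, positive sequences $\{\gamma_k\}$, $\{\lambda_k\}$ and a constant $r<1$, for each $k\ge0$ set $x_{k,0}=x_k$; for $i=0,\dots,m-1$ pick any $g_{f_{i+1}}(x_{k,i})\in\partial f_{i+1}(x_{k,i})$ and $g_h(x_{k,i})\in\partial h(x_{k,i})$ and set $x_{k,i+1}=\mathcal{P}_X\big(x_{k,i}-\gamma_k\big(g_{f_{i+1}}(x_{k,i})+\tfrac{\lambda_k}{m}g_h(x_{k,i})\big)\big)$; then set $x_{k+1}=x_{k,m}$. The averaged iterates are $\bar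 x_N=\sum_{k=0}^{N-1}\gamma_k^r x_k\big/\sum_{k=0}^{N-1}\gamma_k^r$ for $N\ge1$. *)

From Stdlib Require Import Reals.
From mathcomp Require Import ssreflect ssrfun ssrbool eqtype ssrnat seq fintype bigop.

Set Implicit Arguments.
Unset Strict Implicit.

Open Scope R_scope.

Definition vec (n : nat) := 'I_n -> R.

Definition vadd n (u v : vec n) : vec n := fun j => u j + v j.
Definition vsub n (u v : vec n) : vec n := fun j => u j - v j.
Definition vscale n (c : R) (u : vec n) : vec n := fun j => c * u j.

Definition dot n (u v : vec n) : R := \big[Rplus/0]_(j < n) (u j * v j).
Definition norm n (u : vec n) : R := sqrt (dot u u).

Definition comb n (t : R) (x y : vec n) : vec n :=
  vadd (vscale t x) (vscale (1 - t) y).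

Definition convex_set n (X : vec n -> Prop) : Prop :=
  forall x y t, X x -> X y -> 0 <= t <= 1 -> X (comb t x y).

Definition seq_conv n (u : nat -> vec n) (l : vec n) : Prop :=
  forall eps, eps > 0 -> exists N, forall k, (N <= k)%nat -> norm (vsub (u k) l) < eps.

Definition compact_set n (X : vec n -> Prop) : Prop :=
  forall u : nat -> vec n, (forall k, X (u k)) ->
  exists (phi : nat -> nat) (l : vec n),
    (forall k, (phi k < phi (S k))%nat) /\ X l /\ seq_conv (fun k => u (phi k)) l.

Definition convex_fun n (f : vec n -> R) : Prop :=
  forall x y t, 0 <= t <= 1 -> f (comb t x y) <= t * f x + (1 - t) * f y.

Definition strongly_convex n (mu : R) (f : vec n -> R) : Prop :=
  forall x y t, 0 <= t <= 1 ->
    f (comb t x y) <= t * f x + (1 - t) * f y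
                      - mu / 2 * t * (1 - t) * (norm (vsub x y))^2.

Definition subgrad n (f : vec n -> R) (x g : vec n) : Prop :=
  forall y, f y >= f x + dot g (vsub y x).

Definition is_proj n (X : vec n -> Prop) (y p : vec n) : Prop :=
  X p /\ forall z, X z -> norm (vsub p y) <= norm (vsub z y).

(* f = sum_{i<m} fs i  (fs i plays the role of f_{i+1}). *)
Definition fsum n (m : nat) (fs : nat -> vec n -> R) (x : vec n) : R :=
  \big[Rplus/0]_(i < m) fs i x.

Definition argmin n (f : vec n -> R) (X : vec n -> Prop) (x : vec n) : Prop :=
  X x /\ forall y, X y -> f x <= f y.

Definition wavg n (w : nat -> R) (xs : nat -> vec n) (N : nat) : vec n :=
  fun j => (\big[Rplus/0]_(k < N) (w k * xs k j)) / (\big[Rplus/0]_(k < N) w k).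

(* Summing the projected subgradient inequality over the m inner steps of epoch k gives,
   for every y in X,
     |x_{k+1} - y|^2 <= |x_k - y|^2 - 2 g_k (f(x_k) - f(y)) - 2 g_k l_k (h(x_k) - h(y)) + C g_k^2,
   where C only depends on bounds for the subgradients and the Lipschitz constants of the
   f_i and h on the compact set X.  Take y = x_h^*.  Dividing by 2 g_k (resp. 2 g_k l_k),
   using h(x_k) - h(x_h^* ) >= -B (resp. f(x_k) >= f^* ) and multiplying by the weight
   w_k = g_k^r, Abel summation with the nondecreasing factors w_k/g_k and w_k/(g_k l_k)
   bounds sum_{k<=N} w_k (f(x_k) - f^* ) and sum_{k<=N} w_k (h(x_k) - h(x_h^* )) by terms
   that are o(sum_{k<=N} w_k) when a > b, a + b < 1, r < 1 and a r <= 1.  By Jensen's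
   inequality, limsup f(xbar_N) <= f^* and limsup h(xbar_N) <= h(x_h^* ); by lower
   semicontinuity every cluster point of xbar_N in the compact X minimizes f over X with
   h-value at most h(x_h^* ), so it is x_h^* because h is strongly convex. *)

From Stdlib Require Import Reals Lra Psatz ClassicalEpsilon FunctionalExtensionality Classical.
From HB Require Import structures.
From mathcomp Require Import ssreflect ssrfun ssrbool eqtype ssrnat seq fintype bigop div.
From mathcomp Require Import zify.
Set Implicit Arguments.
Unset Strict Implicit.
Open Scope R_scope.

(** * Finite sums and Euclidean geometry *)

HB.instance Definition _ :=
  Monoid.isComLaw.Build R 0 Rplus (fun x y z => esym (Rplus_assoc x y z)) Rplus_comm Rplus_0_l.

Section RealBigops.
Variable p : nat.
Implicit Types F G : 'I_p -> R.

Lemma big_Rscale c F : \big[Rplus/0]_(j < p) (c * F j) = c * \big[Rplus/0]_(j < p) F j.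
Proof.
symmetry; apply: (big_morph (fun x => c * x)); first by move=> x y; ring.
by rewrite Rmult_0_r.
Qed.

Lemma big_Ropp F : \big[Rplus/0]_(j < p) (- F j) = - \big[Rplus/0]_(j < p) F j.
Proof.
symmetry; apply: (big_morph Ropp); first by move=> x y; ring.
by rewrite Ropp_0.
Qed.

Lemma big_Rle F G : (forall j, F j <= G j) ->
  \big[Rplus/0]_(j < p) F j <= \big[Rplus/0]_(j < p) G j.
Proof.
move=> FG; apply: (big_ind2 (fun x y => x <= y)) => [|x1 x2 y1 y2|j _]; try lra.
exact: FG.
Qed.

Lemma big_Rge0 F : (forall j, 0 <= F j) -> 0 <= \big[Rplus/0]_(j < p) F j.
Proof.
move=> F0; apply: (big_ind (fun x => 0 <= x)) => [|x y|j _]; try lra.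
exact: F0.
Qed.

End RealBigops.

Section Vectors.
Variable n : nat.
Implicit Types u v w : vec n.

Definition sqnorm u := dot u u.

Lemma dotC u v : dot u v = dot v u.
Proof. by apply: eq_bigr => j _; rewrite Rmult_comm. Qed.

Lemma dotDl u v w : dot (vadd u v) w = dot u w + dot v w.
Proof. by rewrite /dot -big_split; apply: eq_bigr => j _; rewrite /vadd /=; ring. Qed.

Lemma dotBl u v w : dot (vsub u v) w = dot u w - dot v w.
Proof.
by rewrite /dot /Rminus -big_Ropp -big_split; apply: eq_bigr => j _; rewrite /vsub /=; ring.
Qed.

Lemma dotZl c u w : dot (vscale c u) w = c * dot u w.
Proof. by rewrite /dot -big_Rscale; apply: eq_bigr => j _; rewrite /vscale /=; ring. Qed.

Lemma dotDr u v w : dot w (vadd u v) = dot w u + dot w v.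
Proof. by rewrite dotC dotDl !(dotC w). Qed.

Lemma dotBr u v w : dot w (vsub u v) = dot w u - dot w v.
Proof. by rewrite dotC dotBl !(dotC w). Qed.

Lemma dotZr c u w : dot w (vscale c u) = c * dot w u.
Proof. by rewrite dotC dotZl (dotC w). Qed.

Lemma sqnorm_ge0 u : 0 <= sqnorm u.
Proof. by apply: big_Rge0 => j; nra. Qed.

Lemma sqnormD u v : sqnorm (vadd u v) = sqnorm u + 2 * dot u v + sqnorm v.
Proof. rewrite /sqnorm !dotDl !dotDr (dotC v u); ring. Qed.

Lemma sqnormB u v : sqnorm (vsub u v) = sqnorm u - 2 * dot u v + sqnorm v.
Proof. rewrite /sqnorm !dotBl !dotBr (dotC v u); ring. Qed.

Lemma sqnormZ c u : sqnorm (vscale c u) = c ^ 2 * sqnorm u.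
Proof. rewrite /sqnorm dotZl dotZr; ring. Qed.

Lemma sqnormBC u v : sqnorm (vsub u v) = sqnorm (vsub v u).
Proof. rewrite !sqnormB (dotC v u); ring. Qed.

Lemma sqnormD_le u v t : 0 < t ->
  sqnorm (vadd u v) <= (1 + t) * sqnorm u + (1 + / t) * sqnorm v.
Proof.
move=> t0; rewrite sqnormD.
have := sqnorm_ge0 (vsub (vscale t u) v).
rewrite sqnormB sqnormZ dotZl => H.
have tV : t * / t = 1 by field; lra.
have : 0 <= / t * (t ^ 2 * sqnorm u - 2 * (t * dot u v) + sqnorm v).
  by apply: Rmult_le_pos => //; apply/Rlt_le/Rinv_0_lt_compat.
have -> : / t * (t ^ 2 * sqnorm u - 2 * (t * dot u v) + sqnorm v)
          = t * sqnorm u - 2 * dot u v + / t * sqnorm v by field; lra.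
lra.
Qed.

Lemma coord_sqr_le u (j : 'I_n) : u j ^ 2 <= sqnorm u.
Proof.
rewrite /sqnorm /dot (bigD1 j) //=.
have : 0 <= \big[Rplus/0]_(i < n | i != j) (u i * u i).
  by apply: (big_ind (fun x => 0 <= x)) => [|x y ? ?|i _]; [lra|lra|nra].
by move=> ?; rewrite /= Rmult_1_r -{1}(Rplus_0_r (u j * u j)); apply: Rplus_le_compat_l.
Qed.

Lemma norm_ge0 u : 0 <= norm u.
Proof. exact: sqrt_pos. Qed.

Lemma norm_sqr u : norm u ^ 2 = sqnorm u.
Proof. by rewrite /norm /= Rmult_1_r sqrt_sqrt //; apply: sqnorm_ge0. Qed.

Lemma normZ c u : 0 <= c -> norm (vscale c u) = c * norm u.
Proof.
move=> c0; rewrite /norm -/(sqnorm _) sqnormZ sqrt_mult_alt; last by apply: pow2_ge_0.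
by rewrite sqrt_pow2.
Qed.

Lemma norm_le_sqnorm u v : norm u <= norm v <-> sqnorm u <= sqnorm v.
Proof.
split=> [uv|]; last exact: sqrt_le_1_alt.
by rewrite -!norm_sqr; have := norm_ge0 u; nra.
Qed.

Lemma coord_le_norm u (j : 'I_n) : Rabs (u j) <= norm u.
Proof.
rewrite -(sqrt_Rsqr_abs (u j)); apply: sqrt_le_1_alt; change (Rsqr (u j) <= sqnorm u).
by have := coord_sqr_le u j; rewrite /Rsqr /= Rmult_1_r => ?; lra.
Qed.

Lemma sqnorm_le0_eq u v : sqnorm (vsub u v) <= 0 -> u = v.
Proof.
move=> uv; apply: functional_extensionality => j.
have : vsub u v j ^ 2 <= 0 by have := coord_sqr_le (vsub u v) j; lra.
rewrite /vsub /= => ?; nra.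
Qed.

Lemma sqnorm_le_box u c : (forall j, Rabs (u j) <= c) -> sqnorm u <= INR n * c ^ 2.
Proof.
move=> uc; have -> : INR n * c ^ 2 = \big[Rplus/0]_(j < n) c ^ 2.
  rewrite big_const_ord; elim: n {u uc} => [|k IH]; first by rewrite /=; ring.
  by rewrite iterS -IH S_INR; ring.
apply: big_Rle => j; have := uc j; have := Rabs_pos (u j).
have -> : u j * u j = Rabs (u j) * Rabs (u j) by rewrite -Rabs_mult Rabs_right //; nra.
move=> ? ?; rewrite /=; nra.
Qed.

End Vectors.

Definition sumR (f : nat -> R) (N : nat) : R := \big[Rplus/0]_(k < N) f k.

Lemma sumR0 f : sumR f 0 = 0.
Proof. by rewrite /sumR big_ord0. Qed.

Lemma sumRS f N : sumR f (S N) = sumR f N + f N.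
Proof. by rewrite /sumR big_ord_recr. Qed.

Lemma eq_sumR f g N : (forall k, (k < N)%nat -> f k = g k) -> sumR f N = sumR g N.
Proof. by move=> fg; apply: eq_bigr => k _; apply: fg. Qed.

Lemma sumR_le f g N : (forall k, (k < N)%nat -> f k <= g k) -> sumR f N <= sumR g N.
Proof. by move=> fg; apply: big_Rle => k; apply/fg/ltn_ord. Qed.

Lemma sumR_ge0 f N : (forall k, (k < N)%nat -> 0 <= f k) -> 0 <= sumR f N.
Proof. by move=> f0; apply: big_Rge0 => k; apply: f0. Qed.

Lemma sumR_gt0 f N : (forall k, 0 < f k) -> 0 < sumR f (S N).
Proof.
move=> f0; rewrite sumRS; have := f0 N.
have : 0 <= sumR f N by apply: sumR_ge0 => k _; apply/Rlt_le.
lra.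
Qed.

Lemma sumRD f g N : sumR (fun k => f k + g k) N = sumR f N + sumR g N.
Proof. by rewrite /sumR big_split. Qed.

Lemma sumRB f g N : sumR (fun k => f k - g k) N = sumR f N - sumR g N.
Proof. by rewrite /sumR /Rminus -big_Ropp -big_split. Qed.

Lemma sumRZ c f N : sumR (fun k => c * f k) N = c * sumR f N.
Proof. exact: big_Rscale. Qed.

Lemma sumR_const c N : sumR (fun _ => c) N = INR N * c.
Proof. by elim: N => [|N IH]; rewrite ?sumR0 ?sumRS ?IH ?S_INR /=; ring. Qed.

Lemma sumR_rev f N : sumR f (S N) = sumR (fun k => f (N - k)%nat) (S N).
Proof. by rewrite /sumR (reindex_inj rev_ord_inj); apply: eq_bigr => k _ /=; rewrite subSS. Qed.

Lemma sumR_le_upto f M N : (forall k, 0 <= f k) -> (M <= N)%nat -> sumR f M <= sumR f N.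
Proof.
move=> f0 /subnK <-; elim: (N - M)%nat => [|d IH]; first by rewrite add0n; lra.
by rewrite addSn sumRS; have := f0 (d + M)%nat; lra.
Qed.

Lemma fsumE n m (fs : nat -> vec n -> R) x : fsum m fs x = sumR (fun i => fs i x) m.
Proof. by []. Qed.

Lemma div_in_01 a d : 0 < d -> 0 <= a <= d -> 0 <= a / d <= 1.
Proof.
move=> d0 [a0 ad]; have dV := Rinv_0_lt_compat d d0.
have : a * / d <= d * / d by nra.
rewrite Rinv_r /Rdiv; [split; nra | lra].
Qed.

Definition eventually (P : nat -> Prop) := exists N0, forall N, (N0 <= N)%nat -> P N.

Lemma eventually_subseq (P : nat -> Prop) (s : nat -> nat) :
  (forall N, (N <= s N)%nat) -> eventually P -> eventually (fun N => P (s N)).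
Proof. by move=> sN [N0 HN0]; exists N0 => N NN; apply: HN0; apply: leq_trans NN (sN N). Qed.

Lemma incr_ge_id (phi : nat -> nat) : (forall k, (phi k < phi k.+1)%nat) -> forall k, (k <= phi k)%nat.
Proof. by move=> phiS; elim=> [|k IH] //; apply: leq_ltn_trans IH (phiS k). Qed.

(** * Convex functions on compact sets *)

Section Convexity.
Variable n : nat.
Implicit Types (X : vec n -> Prop) (F : vec n -> R) (u v y z : vec n).

Lemma proj_variational X y p z : convex_set X -> is_proj X y p -> X z ->
  0 <= dot (vsub p y) (vsub z p).
Proof.
move=> HX [Xp pmin] Xz.
set dl := dot (vsub p y) (vsub z p); set S := sqnorm (vsub z p).
have S0 : 0 <= S by apply: sqnorm_ge0.
have small_t : forall t, 0 < t <= 1 -> 0 <= 2 * dl + t * S.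
  move=> t t01; have := pmin _ (HX z p t Xz Xp (conj (Rlt_le _ _ (proj1 t01)) (proj2 t01))).
  have -> : vsub (comb t z p) y = vadd (vsub p y) (vscale t (vsub z p)).
    by apply: functional_extensionality => j; rewrite /comb /vsub /vadd /vscale; ring.
  rewrite norm_le_sqnorm sqnormD sqnormZ dotZr -/dl -/S => H.
  by apply: (Rmult_le_reg_l t); nra.
have : 0 <= 2 * dl; last lra.
apply: Rle_plus_epsilon => e e0; set t := Rmin 1 (e / (S + 1)).
have t0 : 0 < t by apply: Rmin_pos; [lra | apply: Rdiv_lt_0_compat; lra].
have tS : t * S <= e.
  have : t * (S + 1) <= e / (S + 1) * (S + 1).
    by apply: Rmult_le_compat_r; [lra | apply: Rmin_r].
  have -> : e / (S + 1) * (S + 1) = e by field; lra.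
  nra.
have := small_t t (conj t0 (Rmin_l _ _)); lra.
Qed.

Lemma proj_nonexpansive X y p z : convex_set X -> is_proj X y p -> X z ->
  sqnorm (vsub p z) <= sqnorm (vsub y z).
Proof.
move=> HX Hp Xz; have := proj_variational HX Hp Xz.
have -> : vsub y z = vadd (vsub y p) (vsub p z).
  by apply: functional_extensionality => j; rewrite /vsub /vadd; ring.
rewrite sqnormD.
have -> : dot (vsub y p) (vsub p z) = dot (vsub p y) (vsub z p).
  by rewrite !dotBl !dotBr; ring.
have := sqnorm_ge0 (vsub y p); lra.
Qed.

Lemma strongly_convex_convex mu F : 0 < mu -> strongly_convex mu F -> convex_fun F.
Proof.
move=> mu0 HF u v t t01; have := HF u v t t01.
have : 0 <= mu / 2 * t * (1 - t) * norm (vsub u v) ^ 2.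
  rewrite norm_sqr; apply: Rmult_le_pos (sqnorm_ge0 _).
  by case: t01 => ? ?; repeat apply: Rmult_le_pos; lra.
lra.
Qed.

Lemma fsum_convex m (fs : nat -> vec n -> R) :
  (forall i, (i < m)%nat -> convex_fun (fs i)) -> convex_fun (fsum m fs).
Proof.
move=> Hfs u v t t01; rewrite !fsumE -!sumRZ -sumRD.
by apply: sumR_le => i Hi; apply: Hfs.
Qed.

Lemma strongly_convex_argmin_unique mu (f h : vec n -> R) X z z' :
  convex_set X -> convex_fun f -> 0 < mu -> strongly_convex mu h ->
  argmin f X z -> argmin f X z' -> (forall y, argmin f X y -> h z' <= h y) ->
  h z <= h z' -> z = z'.
Proof.
move=> HX Hf mu0 Hh [Xz zmin] [Xz' z'min] z'best hzz'.
have half : 0 <= 1 / 2 <= 1 by lra.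
have mid_argmin : argmin f X (comb (1 / 2) z z').
  split=> [|y Xy]; first exact: HX.
  have := Hf z z' _ half; have := zmin y Xy; have := z'min z Xz; lra.
have := z'best _ mid_argmin; have := Hh z z' _ half.
rewrite norm_sqr => Hconv Hmid; apply: sqnorm_le0_eq.
have := sqnorm_ge0 (vsub z z'); nra.
Qed.

Section WeightedAverage.
Variables (w : nat -> R) (xs : nat -> vec n).
Hypothesis w_pos : forall k, 0 < w k.

Lemma wavgE N j : wavg w xs N j = sumR (fun k => w k * xs k j) N / sumR w N.
Proof. by []. Qed.

Lemma wavg1 : wavg w xs 1 = xs 0%nat.
Proof.
apply: functional_extensionality => j; rewrite wavgE !sumRS !sumR0.
by have ? := w_pos 0%nat; field; lra.
Qed.

Lemma wavgS N : wavg w xs (S (S N)) =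
  comb (sumR w (S N) / sumR w (S (S N))) (wavg w xs (S N)) (xs (S N)).
Proof.
have W0 := sumR_gt0 N w_pos; have W1 := sumR_gt0 N.+1 w_pos.
apply: functional_extensionality => j; rewrite /comb /vadd /vscale !wavgE.
rewrite (sumRS _ (S N)) (sumRS w (S N)); rewrite sumRS in W1; field; lra.
Qed.

Lemma wavg_weight_in_01 N : 0 <= sumR w (S N) / sumR w (S (S N)) <= 1.
Proof.
apply: div_in_01; first exact: sumR_gt0.
by rewrite (sumRS w (S N)); have := sumR_gt0 N w_pos; have := w_pos (S N); lra.
Qed.

Lemma wavg_in_convex X N : convex_set X -> (forall k, X (xs k)) -> X (wavg w xs (S N)).
Proof.
move=> HX Xxs; elim: N => [|N IH]; first by rewrite wavg1.
by rewrite wavgS; apply: HX => //; apply: wavg_weight_in_01.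
Qed.

Lemma jensen_wavg F N : convex_fun F ->
  F (wavg w xs (S N)) * sumR w (S N) <= sumR (fun k => w k * F (xs k)) (S N).
Proof.
move=> HF; elim: N => [|N IH].
  by rewrite wavg1 !sumRS !sumR0; lra.
have W1 := sumR_gt0 N.+1 w_pos.
set t := sumR w (S N) / sumR w (S (S N)).
have Et : t * sumR w (S (S N)) = sumR w (S N) by rewrite /t; field; lra.
have Et' : (1 - t) * sumR w (S (S N)) = w (S N).
  by rewrite /t (sumRS w (S N)) in W1 *; field; lra.
rewrite wavgS -/t (sumRS (fun k => _ * _)).
have := Rmult_le_compat_r _ _ _ (Rlt_le _ _ W1) (HF (wavg w xs (S N)) (xs (S N)) t (wavg_weight_in_01 N)).
have -> : (t * F (wavg w xs (S N)) + (1 - t) * F (xs (S N))) * sumR w (S (S N)) =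
  F (wavg w xs (S N)) * (t * sumR w (S (S N))) + F (xs (S N)) * ((1 - t) * sumR w (S (S N))) by ring.
rewrite Et Et'; lra.
Qed.

End WeightedAverage.

Lemma compact_bounded X x0 : compact_set X -> X x0 ->
  exists c, 0 < c /\ forall x, X x -> forall j, Rabs (x j - x0 j) <= c.
Proof.
move=> HC X0; apply: NNPP => unbounded.
have far : forall k : nat, exists x, X x /\ exists j, INR k + 1 < Rabs (x j - x0 j).
  move=> k; apply: NNPP => Hk; apply: unbounded; exists (INR k + 1); split.
    by have := pos_INR k; lra.
  move=> x Xx j; apply: Rnot_lt_le => Hl; apply: Hk; exists x; split=> //; by exists j.
pose u k := proj1_sig (constructive_indefinite_description _ (far k)).
have Hu k : X (u k) /\ exists j, INR k + 1 < Rabs (u k j - x0 j).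
  exact: (proj2_sig (constructive_indefinite_description _ (far k))).
have [phi [l [phiS [_ ul]]]] := HC u (fun k => proj1 (Hu k)).
have [N HN] := ul 1 Rlt_0_1.
have [K HK] := INR_archimed 1 (1 + norm (vsub l x0)) Rlt_0_1.
set k := maxn N K; have [_ [j Hj]] := Hu (phi k).
have : INR K <= INR (phi k).
  by apply/le_INR/leP; apply: leq_trans (leq_maxr N K) (incr_ge_id phiS k).
have := HN k (leq_maxl N K).
have : Rabs (u (phi k) j - l j) <= norm (vsub (u (phi k)) l) := coord_le_norm _ j.
have : Rabs (l j - x0 j) <= norm (vsub l x0) := coord_le_norm _ j.
have := Rabs_triang (u (phi k) j - l j) (l j - x0 j).
have -> : u (phi k) j - l j + (l j - x0 j) = u (phi k) j - x0 j by ring.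
lra.
Qed.

Lemma compact_sqdiam X x0 : compact_set X -> X x0 ->
  exists D, 0 <= D /\ forall u v, X u -> X v -> sqnorm (vsub u v) <= D.
Proof.
move=> HC X0; have [c [c0 Hc]] := compact_bounded HC X0.
exists (INR n * (2 * c) ^ 2); split; first by apply: Rmult_le_pos; [apply: pos_INR | nra].
move=> u v Xu Xv; apply: sqnorm_le_box => j; rewrite /vsub.
have := Hc u Xu j; have := Hc v Xv j.
have := Rabs_triang (u j - x0 j) (- (v j - x0 j)); rewrite Rabs_Ropp.
have -> : u j - x0 j + - (v j - x0 j) = u j - v j by ring.
lra.
Qed.

Definition vupd u (k : nat) (c : R) : vec n :=
  fun j => if nat_of_ord j == k then c else u j.

Lemma convex_bounded_on_partial_box F c : convex_fun F -> 0 < c ->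
  forall k, (k <= n)%nat -> forall p, exists M, forall u,
    (forall j : 'I_n, (j < k)%nat -> Rabs (u j - p j) <= c) ->
    (forall j : 'I_n, (k <= j)%nat -> u j = p j) -> F u <= M.
Proof.
move=> HF c0; elim=> [|k IH] kn p.
  exists (F p) => u _ up.
  have -> : u = p by apply: functional_extensionality => j; apply: up.
  exact: Rle_refl.
set o := Ordinal kn.
have [M1 HM1] := IH (ltnW kn) (vupd p k (p o - c)).
have [M2 HM2] := IH (ltnW kn) (vupd p k (p o + c)).
exists (Rmax M1 M2) => u ubox uout.
have face d : (forall j : 'I_n, (j < k)%nat -> Rabs (vupd u k d j - vupd p k d j) <= c) /\
              (forall j : 'I_n, (k <= j)%nat -> vupd u k d j = vupd p k d j).
  split=> j jk; rewrite /vupd.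
    by rewrite (ltn_eqF jk); apply: ubox; apply: leqW.
  case: eqP => // /eqP jk'; apply: uout; by rewrite ltn_neqAle eq_sym jk' jk.
(* u is a convex combination of the two points obtained by moving its k-th coordinate to
   the faces p o - c and p o + c, which fall under the induction hypothesis *)
have uo : Rabs (u o - p o) <= c by apply: ubox.
set t := (p o + c - u o) / (2 * c).
have t01 : 0 <= t <= 1.
  apply: div_in_01; first lra.
  have := Rle_abs (u o - p o); have := Rle_abs (- (u o - p o)); rewrite Rabs_Ropp; lra.
have -> : u = comb t (vupd u k (p o - c)) (vupd u k (p o + c)).
  apply: functional_extensionality => j; rewrite /comb /vadd /vscale /vupd.
  case: eqP => jk; last ring.
  have -> : j = o by apply: val_inj.
  by rewrite /t; field; lra.
have [b1 o1] := face (p o - c); have [b2 o2] := face (p o + c).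
apply: Rle_trans (HF _ _ _ t01) _.
have := HM1 _ b1 o1; have := HM2 _ b2 o2; have := Rmax_l M1 M2; have := Rmax_r M1 M2.
nra.
Qed.

Lemma convex_bounded_on_box F c p : convex_fun F -> 0 < c ->
  exists M, forall u, (forall j, Rabs (u j - p j) <= c) -> F u <= M.
Proof.
move=> HF c0; have [M HM] := convex_bounded_on_partial_box HF c0 (leqnn n) p.
exists M => u ubox; apply: HM => [j _|j]; first exact: ubox.
by rewrite leqNgt ltn_ord.
Qed.

Lemma box_unit_step X x0 c u d : (forall x, X x -> forall j, Rabs (x j - x0 j) <= c) ->
  X u -> norm d <= 1 -> forall j, Rabs (vadd u d j - x0 j) <= c + 1.
Proof.
move=> Xbox Xu d1 j; rewrite /vadd.
have -> : u j + d j - x0 j = (u j - x0 j) + d j by ring.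
have := Rabs_triang (u j - x0 j) (d j); have := Xbox u Xu j; have := coord_le_norm d j.
lra.
Qed.

Lemma subgrad_lower_bound F X x0 g0 D : subgrad F x0 g0 ->
  (forall y, X y -> sqnorm (vsub y x0) <= D) -> exists L, forall y, X y -> L <= F y.
Proof.
move=> Hg XD; exists (F x0 - (sqnorm g0 + D) / 2) => y Xy.
have := Hg y; have := sqnorm_ge0 (vadd g0 (vsub y x0)); rewrite sqnormD.
have := XD y Xy; rewrite /sqnorm; lra.
Qed.

Section BoxBounds.
Variables (X : vec n -> Prop) (F : vec n -> R) (x0 : vec n) (c M L : R).
Hypothesis Xbox : forall x, X x -> forall j, Rabs (x j - x0 j) <= c.
Hypothesis Fup : forall u, (forall j, Rabs (u j - x0 j) <= c + 1) -> F u <= M.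
Hypothesis Flow : forall y, X y -> L <= F y.

Lemma subgrad_sqnorm_le x g : X x -> subgrad F x g -> sqnorm g <= (M - L) ^ 2.
Proof.
move=> Xx Hg; have g0 := norm_ge0 g.
case: (Req_dec (norm g) 0) => [gz|gnz].
  by rewrite -norm_sqr gz; have := pow2_ge_0 (M - L); rewrite /=; lra.
have gpos : 0 < norm g by lra.
have sV : 0 <= / norm g by apply/Rlt_le/Rinv_0_lt_compat.
have d1 : norm (vscale (/ norm g) g) <= 1 by rewrite normZ // Rinv_l; lra.
have := Hg (vadd x (vscale (/ norm g) g)); have := Fup (box_unit_step Xbox Xx d1).
have -> : dot g (vsub (vadd x (vscale (/ norm g) g)) x) = norm g.
  rewrite dotBr dotDr dotZr -/(sqnorm g) -norm_sqr; field; lra.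
have := Flow Xx; rewrite -norm_sqr => ? ? ?.
have : norm g <= M - L by lra.
nra.
Qed.

Lemma convex_lipschitz_on : convex_fun F ->
  forall u v, X u -> X v -> F v - F u <= (M - L) * norm (vsub v u).
Proof.
move=> HF u v Xu Xv; have t0 := norm_ge0 (vsub v u).
case: (Req_dec (norm (vsub v u)) 0) => [tz|tnz].
  have : sqnorm (vsub v u) <= 0 by rewrite -norm_sqr tz /=; lra.
  by move=> /sqnorm_le0_eq vu; rewrite tz vu; lra.
set t := norm (vsub v u); have tpos : 0 < t by rewrite /t; lra.
have tV : 0 < / t by apply: Rinv_0_lt_compat.
set z := vadd v (vscale (/ t) (vsub v u)).
have Fz : F z <= M.
  apply: Fup; apply: (box_unit_step Xbox Xv).
  by rewrite normZ -/t; [rewrite Rinv_l; lra | lra].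
have l01 : 0 <= / (1 + t) <= 1.
  by rewrite -[/ (1 + t)]Rmult_1_l; apply: div_in_01; lra.
have := HF u z _ l01.
have -> : comb (/ (1 + t)) u z = v.
  apply: functional_extensionality => j; rewrite /comb /z /vadd /vscale /vsub.
  by field; lra.
have Fu : F u <= M by apply: Fup => j; have := Xbox Xu j; lra.
have Lu := Flow Xu.
set s := / (1 + t) in l01 *.
have st : 1 - s <= t.
  have -> : 1 - s = s * t by rewrite /s; field; lra.
  by have := Rmult_le_compat_r _ _ _ (Rlt_le _ _ tpos) (proj2 l01); lra.
have : (1 - s) * (F z - F u) <= (1 - s) * (M - L) by apply: Rmult_le_compat_l; lra.
have : (1 - s) * (M - L) <= t * (M - L) by apply: Rmult_le_compat_r; lra.
nra.
Qed.

End BoxBounds.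

Lemma convex_regular_on_compact X F x0 g0 :
  compact_set X -> X x0 -> convex_fun F -> subgrad F x0 g0 ->
  exists G, 0 <= G /\ (forall x g, X x -> subgrad F x g -> sqnorm g <= G) /\
    (forall u v, X u -> X v -> F v - F u <= G * norm (vsub v u)).
Proof.
move=> HC X0 HF Hg0.
have [c [c0 Xbox]] := compact_bounded HC X0.
have [D [_ XD]] := compact_sqdiam HC X0.
have [M Fup] := convex_bounded_on_box x0 HF (Rplus_lt_0_compat _ _ c0 Rlt_0_1).
have [L Flow] := subgrad_lower_bound Hg0 (fun y Xy => XD y x0 Xy X0).
have ML : 0 <= M - L.
  have := Flow x0 X0; have : F x0 <= M.
    by apply: Fup => j; rewrite Rminus_diag_eq // Rabs_R0; lra.
  lra.
exists (Rmax ((M - L) ^ 2) (M - L)); split; first exact: Rle_trans ML (Rmax_r _ _).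
split=> [x g Xx Hg | u v Xu Xv].
  exact: Rle_trans (subgrad_sqnorm_le Xbox Fup Flow Xx Hg) (Rmax_l _ _).
apply: Rle_trans (convex_lipschitz_on Xbox Fup Flow HF Xu Xv) _.
by apply: Rmult_le_compat_r; [apply: norm_ge0 | apply: Rmax_r].
Qed.

Lemma convex_near_lower_bound F z : convex_fun F ->
  exists M, forall d u, 0 < d -> (forall j, Rabs (u j - z j) <= d) ->
    (1 + d) * F z <= F u + d * M.
Proof.
move=> HF; have [M HM] := convex_bounded_on_box z HF Rlt_0_1.
exists M => d u d0 ubox; have dV := Rinv_0_lt_compat d d0.
(* z = u/(1+d) + d v/(1+d) for the reflected point v = z - (u - z)/d, which is 1-close to z *)
set v := vsub z (vscale (/ d) (vsub u z)).
have Fv : F v <= M.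
  apply: HM => j; rewrite /v /vsub /vscale.
  have -> : z j - / d * (u j - z j) - z j = - (/ d * (u j - z j)) by ring.
  rewrite Rabs_Ropp Rabs_mult (Rabs_right (/ d)); last lra.
  have := Rmult_le_compat_l _ _ _ (Rlt_le _ _ dV) (ubox j).
  by rewrite Rinv_l; lra.
have l01 : 0 <= / (1 + d) <= 1 by rewrite -[/ (1 + d)]Rmult_1_l; apply: div_in_01; lra.
have := HF u v _ l01.
have -> : comb (/ (1 + d)) u v = z.
  by apply: functional_extensionality => j; rewrite /comb /v /vadd /vscale /vsub; field; lra.
move=> Fz; have := Rmult_le_compat_l _ _ _ (Rlt_le 0 (1 + d) ltac:(lra)) Fz.
have -> : (1 + d) * (/ (1 + d) * F u + (1 - / (1 + d)) * F v) = F u + d * F v by field; lra.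
have := Rmult_le_compat_l _ _ _ (Rlt_le _ _ d0) Fv; lra.
Qed.

Lemma convex_limit_le F (v : nat -> vec n) z c : convex_fun F -> seq_conv v z ->
  (forall e, 0 < e -> eventually (fun N => F (v N) <= c + e)) -> F z <= c.
Proof.
move=> HF vz Fv; have [M HM] := convex_near_lower_bound z HF.
apply: Rle_plus_epsilon => e e0.
have A0 := Rabs_pos (M - F z).
set d := e / (2 * (Rabs (M - F z) + 1)).
have d0 : 0 < d by apply: Rdiv_lt_0_compat; lra.
have dM : d * (M - F z) <= e / 2.
  apply: Rle_trans (Rmult_le_compat_l _ _ _ (Rlt_le _ _ d0) (Rle_abs _)) _.
  have -> : d * Rabs (M - F z) = e / 2 * (Rabs (M - F z) / (Rabs (M - F z) + 1)).
    by rewrite /d; field; lra.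
  have := @div_in_01 (Rabs (M - F z)) (Rabs (M - F z) + 1) ltac:(lra) ltac:(lra).
  nra.
have [N1 H1] := vz d d0; have [N2 H2] := Fv (e / 2) ltac:(lra).
set N := maxn N1 N2.
have near : forall j, Rabs (v N j - z j) <= d.
  move=> j; apply: Rlt_le; apply: Rle_lt_trans (H1 N (leq_maxl _ _)).
  exact: (coord_le_norm (vsub (v N) z) j).
have := HM d (v N) d0 near; have := H2 N (leq_maxr _ _); lra.
Qed.

Lemma compact_unique_cluster X (v : nat -> vec n) l : compact_set X -> (forall N, X (v N)) ->
  (forall (s : nat -> nat) z, (forall N, (N <= s N)%nat) -> X z ->
     seq_conv (fun N => v (s N)) z -> z = l) ->
  seq_conv v l.
Proof.
move=> HC Xv cluster; apply: NNPP => nconv.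
have [e [e0 far]] : exists e, 0 < e /\
    forall N, exists k, (N <= k)%nat /\ e <= norm (vsub (v k) l).
  apply: NNPP => H1; apply: nconv => e e0; apply: NNPP => H2; apply: H1.
  exists e; split=> // N; apply: NNPP => H3; apply: H2; exists N => k kN.
  by apply: Rnot_le_lt => H4; apply: H3; exists k.
pose psi N := proj1_sig (constructive_indefinite_description _ (far N)).
have Hpsi N : (N <= psi N)%nat /\ e <= norm (vsub (v (psi N)) l).
  exact: (proj2_sig (constructive_indefinite_description _ (far N))).
have [phi [z [phiS [Xz vz]]]] := HC (fun N => v (psi N)) (fun N => Xv (psi N)).
have zl : z = l.
  apply: (cluster (fun N => psi (phi N))) => // N.
  exact: leq_trans (incr_ge_id phiS N) (proj1 (Hpsi _)).
rewrite zl in vz; have [K HK] := vz e e0.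
have := HK K (leqnn K); have := proj2 (Hpsi (phi K)); lra.
Qed.

End Convexity.

Lemma exists_common_bound (P : nat -> R -> Prop) m :
  (forall i G G', G <= G' -> P i G -> P i G') ->
  (forall i, (i < m)%nat -> exists G, P i G) ->
  exists G, 0 <= G /\ forall i, (i < m)%nat -> P i G.
Proof.
move=> Pmono; elim: m => [|m IH] Hex; first by exists 0; split; [lra | by []].
have [G1 [G10 H1]] : exists G, 0 <= G /\ forall i, (i < m)%nat -> P i G.
  by apply: IH => i im; apply: Hex; apply: ltnW.
have [G2 H2] := Hex m (ltnSn m).
exists (Rmax G1 G2); split; first exact: Rle_trans G10 (Rmax_l _ _).
move=> i; rewrite ltnS leq_eqVlt => /orP [/eqP -> | im].
  exact: Pmono (Rmax_r _ _) H2.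
exact: Pmono (Rmax_l _ _) (H1 i im).
Qed.

(** * Asymptotics of power-law step sizes *)

Definition negligible (W P : nat -> R) :=
  forall e, 0 < e -> eventually (fun N => P N <= e * W N).

Lemma negligibleD W P Q : negligible W P -> negligible W Q ->
  negligible W (fun N => P N + Q N).
Proof.
move=> HP HQ e e0.
have [N1 H1] := HP (e / 2) ltac:(lra); have [N2 H2] := HQ (e / 2) ltac:(lra).
exists (maxn N1 N2) => N NN.
have := H1 N (leq_trans (leq_maxl _ _) NN); have := H2 N (leq_trans (leq_maxr _ _) NN).
lra.
Qed.

Lemma negligibleZ W c P : (forall N, 0 <= W N) -> 0 <= c -> negligible W P ->
  negligible W (fun N => c * P N).
Proof.
move=> W_ge0 c0 HP e e0; have [N0 H0] := HP (e / (c + 1)) ltac:(apply: Rdiv_lt_0_compat; lra).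
exists N0 => N NN; have := Rmult_le_compat_l _ _ _ c0 (H0 N NN).
have -> : c * (e / (c + 1) * W N) = c / (c + 1) * (e * W N) by field; lra.
have := @div_in_01 c (c + 1) ltac:(lra) ltac:(lra).
have := Rmult_le_pos _ _ (Rlt_le _ _ e0) (W_ge0 N); nra.
Qed.

Lemma negligible_le W P Q : (forall N, P N <= Q N) -> negligible W Q -> negligible W P.
Proof.
move=> PQ HQ e e0; have [N0 H0] := HQ e e0.
by exists N0 => N NN; apply: Rle_trans (PQ N) (H0 N NN).
Qed.

Lemma negligible_cesaro (w eps : nat -> R) : (forall k, 0 < w k) ->
  (forall A, eventually (fun N => A <= sumR w (S N))) ->
  (forall k, 0 <= eps k) -> (forall e, 0 < e -> eventually (fun k => eps k <= e)) ->
  negligible (fun N => sumR w (S N)) (fun N => sumR (fun k => w k * eps k) (S N)).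
Proof.
move=> w0 wdiv eps0 epsv e e0.
have weps0 k : 0 <= w k * eps k by have := w0 k; have := eps0 k; nra.
have [K HK] := epsv (e / 2) ltac:(lra).
set A := sumR (fun k => w k * eps k) K.
have A0 : 0 <= A by apply: sumR_ge0.
have head_tail N : sumR (fun k => w k * eps k) N <= A + e / 2 * sumR w N.
  elim: N => [|N IH]; first by rewrite !sumR0; lra.
  have W0 : 0 <= sumR w N.+1 by apply: sumR_ge0 => k _; apply: Rlt_le.
  case: (ltnP N K) => NK.
    have : sumR (fun k => w k * eps k) N.+1 <= A by apply: sumR_le_upto.
    nra.
  rewrite !sumRS; have := HK N NK; have := w0 N; nra.
have [N0 HN0] := wdiv (2 * A / e).
exists N0 => N NN; have := head_tail (S N); have := HN0 N NN.
have -> : 2 * A / e = / e * (2 * A) by rewrite /Rdiv Rmult_comm.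
move=> H; have := Rmult_le_compat_l _ _ _ (Rlt_le _ _ e0) H.
have -> : e * (/ e * (2 * A)) = 2 * A by field; lra.
lra.
Qed.

Lemma exp_le a b : a <= b -> exp a <= exp b.
Proof. by case=> [ab | ->]; [apply/Rlt_le/exp_increasing | apply: Rle_refl]. Qed.

Lemma ln_le a b : 0 < a -> a <= b -> ln a <= ln b.
Proof. by move=> a0 [ab | ->]; [apply/Rlt_le/ln_increasing | apply: Rle_refl]. Qed.

Lemma INR_succ_pos k : 0 < INR (k + 1).
Proof. by rewrite plus_INR /=; have := pos_INR k; lra. Qed.

Lemma ln_unbounded A : eventually (fun N => A <= ln (INR (N + 1))).
Proof.
have [N0 HN0] := INR_archimed 1 (exp A) Rlt_0_1.
exists N0 => N NN; rewrite -(ln_exp A); apply: ln_le; first exact: exp_pos.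
have := le_INR _ _ (elimT leP NN); rewrite plus_INR /=; lra.
Qed.

Lemma harmonic_ge_ln N : ln (INR (N + 1)) <= sumR (fun k => / INR (k + 1)) N.
Proof.
elim: N => [|N IH]; first by rewrite sumR0 /= ln_1; lra.
rewrite sumRS; have N0 := INR_succ_pos N; have NV := Rinv_0_lt_compat _ N0.
have -> : INR (N.+1 + 1) = INR (N + 1) * (1 + / INR (N + 1)).
  by rewrite !plus_INR S_INR /=; field; rewrite plus_INR /= in N0; lra.
rewrite ln_mult //; last lra.
have : ln (1 + / INR (N + 1)) <= / INR (N + 1).
  by rewrite -{2}(ln_exp (/ INR (N + 1))); apply: ln_le; [lra | apply: exp_ineq1_le].
lra.
Qed.

Lemma Rpower_pos x y : 0 < Rpower x y.
Proof. exact: exp_pos. Qed.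

Definition pw (q : R) (k : nat) : R := Rpower (INR (k + 1)) q.

Lemma pw_pos q k : 0 < pw q k.
Proof. exact: Rpower_pos. Qed.

Lemma pwD p q k : pw (p + q) k = pw p k * pw q k.
Proof. exact: Rpower_plus. Qed.

Lemma pwN q k : pw (- q) k = / pw q k.
Proof. exact: Rpower_Ropp. Qed.

Lemma pw1 k : pw 1 k = INR (k + 1).
Proof. exact/Rpower_1/INR_succ_pos. Qed.

Lemma pw_le_exp p q k : p <= q -> pw p k <= pw q k.
Proof.
by apply: Rle_Rpower; rewrite plus_INR /=; have := pos_INR k; lra.
Qed.

Lemma pw_nondecreasing q k k' : 0 <= q -> (k <= k')%nat -> pw q k <= pw q k'.
Proof.
move=> q0 kk'; apply: Rle_Rpower_l => //; split; first exact: INR_succ_pos.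
by apply/le_INR/leP; rewrite leq_add2r.
Qed.

Lemma pw_nonincreasing q k k' : q <= 0 -> (k <= k')%nat -> pw q k' <= pw q k.
Proof.
move=> q0 kk'; rewrite -(Ropp_involutive q) (pwN (- q) k) (pwN (- q) k').
by apply: Rinv_le_contravar; [apply: pw_pos | apply: pw_nondecreasing kk'; lra].
Qed.

Lemma pw_vanish q : q < 0 -> forall e, 0 < e -> eventually (fun k => pw q k <= e).
Proof.
move=> q0 e e0; have [N0 HN0] := ln_unbounded (ln e / q).
exists N0 => k kN; rewrite /pw /Rpower -(exp_ln e e0); apply: exp_le.
have -> : ln e = q * (ln e / q) by field; lra.
by apply: Rmult_le_compat_neg_l; [lra | apply: HN0].
Qed.

Lemma sum_pw_unbounded q : -1 <= q -> forall A, eventually (fun N => A <= sumR (pw q) (S N)).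
Proof.
move=> q1 A; have [N0 HN0] := ln_unbounded A.
exists N0 => N NN; apply: Rle_trans (HN0 _ (leqW NN)) _.
apply: Rle_trans (harmonic_ge_ln _) _; apply: sumR_le => k _.
have <- : pw (- 1) k = / INR (k + 1) by rewrite pwN pw1.
exact: pw_le_exp.
Qed.

Lemma pw_sum_lower q : exists K, 0 < K /\
  forall N, INR (N + 1) * pw q N <= K * sumR (pw q) (S N).
Proof.
have const N (c : R) : INR (N + 1) * c = sumR (fun _ => c) (S N) by rewrite sumR_const addn1.
case: (Rle_lt_dec q 0) => [q0 | q0].
  exists 1; split=> [|N]; first lra.
  by rewrite Rmult_1_l const; apply: sumR_le => k kN; apply: pw_nonincreasing.
(* one of k and N - k is at least N/2, and (N+1)^q <= 2^q (N/2+1)^q *)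
have P2 := Rpower_pos 2 q.
exists (2 * Rpower 2 q); split=> [|N]; first lra.
set h := (N %/ 2)%nat.
have half : INR (N + 1) * pw q h <= 2 * sumR (pw q) (S N).
  have -> : 2 * sumR (pw q) (S N) = sumR (fun k => pw q k + pw q (N - k)) (S N).
    by rewrite sumRD -sumR_rev; ring.
  rewrite const; apply: sumR_le => k kN; have := pw_pos q k; have := pw_pos q (N - k).
  case: (leqP h k) => hk.
    have := pw_nondecreasing (Rlt_le _ _ q0) hk; lra.
  have : (h <= N - k)%nat by rewrite /h in hk *; lia.
  by move/(pw_nondecreasing (Rlt_le _ _ q0)); lra.
have top : pw q N <= Rpower 2 q * pw q h.
  rewrite /pw Rpower_mult_distr; [| lra | exact: INR_succ_pos].
  apply: Rle_Rpower_l; first lra; split; first exact: INR_succ_pos.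
  rewrite -(mult_INR 2); apply/le_INR/leP; rewrite /h; have := divn2 N; lia.
have := Rmult_le_compat_l _ _ _ (Rlt_le _ _ (INR_succ_pos N)) top.
nra.
Qed.

Lemma negligible_boundary (w : nat -> R) K p : 0 < K -> (forall k, 0 < w k) ->
  (forall N, INR (N + 1) * w N <= K * sumR w (S N)) -> p < 1 ->
  negligible (fun N => sumR w (S N)) (fun N => w N * pw p N).
Proof.
move=> K0 w0 wK p1 e e0.
have [N0 HN0] := pw_vanish (q := p - 1) ltac:(lra) (Rdiv_lt_0_compat _ _ e0 K0).
exists N0 => N NN.
have -> : w N * pw p N = INR (N + 1) * w N * pw (p - 1) N.
  have -> : pw p N = pw 1 N * pw (p - 1) N by rewrite -pwD; congr pw; ring.
  by rewrite pw1; ring.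
apply: Rle_trans (Rmult_le_compat_r _ _ _ (Rlt_le _ _ (pw_pos _ _)) (wK N)) _.
have W0 := sumR_gt0 N w0.
apply: Rle_trans (Rmult_le_compat_l _ _ _ _ (HN0 N NN)) _; first nra.
by right; field; lra.
Qed.

Definition step_size (c0 e : R) (k : nat) : R := c0 / Rpower (INR (k + 1)) e.

Lemma step_sizeE c0 e k : step_size c0 e k = c0 * pw (- e) k.
Proof. by rewrite pwN. Qed.

Lemma step_size_bounds c0 e k : 0 < c0 -> 0 <= e -> 0 < step_size c0 e k <= c0.
Proof.
move=> c0_pos e0; rewrite step_sizeE; have := pw_pos (- e) k.
have : pw (- e) k <= 1 by rewrite -(Rpower_O (INR (k + 1))); [apply: pw_le_exp; lra | apply: INR_succ_pos].
move=> ? ?; split; nra.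
Qed.

Definition step_weight (c0 e r : R) (k : nat) : R := Rpower (step_size c0 e k) r.

Section PowerSteps.
Variables (a b gamma0 lambda0 r : R).
Hypotheses (a_pos : 0 < a) (b_pos : 0 < b) (gamma0_pos : 0 < gamma0) (lambda0_pos : 0 < lambda0).
Hypotheses (r_lt1 : r < 1) (b_lt_a : b < a) (ab_lt1 : a + b < 1) (ar_le1 : a * r <= 1).

Local Notation gam := (step_size gamma0 a).
Local Notation lam := (step_size lambda0 b).
Local Notation w := (step_weight gamma0 a r).

Lemma step_weightE k : w k = Rpower gamma0 r * pw (- (a * r)) k.
Proof.
rewrite /step_weight step_sizeE -Rpower_mult_distr //; last exact: pw_pos.
by rewrite /pw Rpower_mult; congr (_ * Rpower _ _); ring.
Qed.

Lemma step_weight_pos k : 0 < w k.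
Proof. exact: Rpower_pos. Qed.

Lemma step_weight_div_step k : w k / gam k = Rpower gamma0 r / gamma0 * pw (a - a * r) k.
Proof.
rewrite step_weightE step_sizeE; have := pw_pos (- a) k.
have -> : a - a * r = - (a * r) + - - a by ring.
rewrite pwD (pwN (- a)) => ?; field; split; lra.
Qed.

Lemma step_weight_div_steps k :
  w k / (gam k * lam k) = Rpower gamma0 r / (gamma0 * lambda0) * pw (a + b - a * r) k.
Proof.
rewrite step_weightE !step_sizeE; have := pw_pos (- a) k; have := pw_pos (- b) k.
have -> : a + b - a * r = - (a * r) + (- - a + - - b) by ring.
rewrite !pwD (pwN (- a)) (pwN (- b)) => ? ?; field; repeat split; lra.
Qed.

Lemma step_weight_div_step_le k : w k / gam k <= w (S k) / gam (S k).
Proof.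
rewrite !step_weight_div_step; apply: Rmult_le_compat_l.
  by apply/Rlt_le/Rdiv_lt_0_compat; [apply: Rpower_pos | lra].
by apply: pw_nondecreasing; [nra | apply: leqnSn].
Qed.

Lemma step_weight_div_steps_le k :
  w k / (gam k * lam k) <= w (S k) / (gam (S k) * lam (S k)).
Proof.
rewrite !step_weight_div_steps; apply: Rmult_le_compat_l.
  by apply/Rlt_le/Rdiv_lt_0_compat; [apply: Rpower_pos | nra].
by apply: pw_nondecreasing; [nra | apply: leqnSn].
Qed.

Lemma sum_step_weightE N : sumR w N = Rpower gamma0 r * sumR (pw (- (a * r))) N.
Proof. by rewrite -sumRZ; apply: eq_sumR => k _; apply: step_weightE. Qed.

Lemma sum_step_weight_unbounded A : eventually (fun N => A <= sumR w (S N)).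
Proof.
have c0 := Rpower_pos gamma0 r.
have [N0 HN0] := sum_pw_unbounded (q := - (a * r)) ltac:(lra) (A / Rpower gamma0 r).
exists N0 => N NN; rewrite sum_step_weightE.
have := Rmult_le_compat_l _ _ _ (Rlt_le _ _ c0) (HN0 N NN).
by have -> : Rpower gamma0 r * (A / Rpower gamma0 r) = A by field; lra.
Qed.

Lemma sum_step_weight_lower : exists K, 0 < K /\
  forall N, INR (N + 1) * w N <= K * sumR w (S N).
Proof.
have [K [K0 HK]] := pw_sum_lower (- (a * r)).
exists K; split=> // N; rewrite sum_step_weightE step_weightE.
have := Rmult_le_compat_l _ _ _ (Rlt_le _ _ (Rpower_pos gamma0 r)) (HK N); lra.
Qed.

Lemma scaled_pw_vanish c q : 0 < c -> q < 0 ->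
  forall e, 0 < e -> eventually (fun k => c * pw q k <= e).
Proof.
move=> c0 q0 e e0; have [N0 HN0] := pw_vanish q0 (Rdiv_lt_0_compat _ _ e0 c0).
exists N0 => k kN; have := Rmult_le_compat_l _ _ _ (Rlt_le _ _ c0) (HN0 k kN).
by have -> : c * (e / c) = e by field; lra.
Qed.

Local Notation W := (fun N => sumR w (S N)).

Lemma negligible_boundary_step_weight p : p < 1 -> negligible W (fun N => w N * pw p N).
Proof.
have [K [K0 HK]] := sum_step_weight_lower.
by apply: negligible_boundary K0 step_weight_pos HK.
Qed.

Lemma negligible_step_weight_div_step : negligible W (fun N => w N / gam N).
Proof.
apply: (negligible_le (Q := fun N => / gamma0 * (w N * pw a N))).
  move=> N; right; rewrite step_sizeE pwN; have := pw_pos a N => ?.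
  by field; split; lra.
apply: negligibleZ; first by move=> N; apply/Rlt_le/sumR_gt0/step_weight_pos.
  by apply/Rlt_le/Rinv_0_lt_compat.
by apply: negligible_boundary_step_weight; lra.
Qed.

Lemma negligible_step_weight_div_steps : negligible W (fun N => w N / (gam N * lam N)).
Proof.
apply: (negligible_le (Q := fun N => / (gamma0 * lambda0) * (w N * pw (a + b) N))).
  move=> N; right; rewrite !step_sizeE !pwN pwD.
  have := pw_pos a N; have := pw_pos b N => ? ?.
  by field; repeat split; lra.
apply: negligibleZ; first by move=> N; apply/Rlt_le/sumR_gt0/step_weight_pos.
  by apply/Rlt_le/Rinv_0_lt_compat; nra.
exact: negligible_boundary_step_weight.
Qed.

Lemma negligible_weighted_cesaro c q : 0 < c -> q < 0 ->
  negligible W (fun N => sumR (fun k => w k * (c * pw q k)) (S N)).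
Proof.
move=> c0 q0; apply: negligible_cesaro.
- exact: step_weight_pos.
- exact: sum_step_weight_unbounded.
- by move=> k; apply/Rlt_le/Rmult_lt_0_compat => //; apply: pw_pos.
- exact: scaled_pw_vanish.
Qed.

Lemma negligible_weighted_steps : negligible W (fun N => sumR (fun k => w k * gam k) (S N)).
Proof.
apply: (negligible_le (Q := fun N => sumR (fun k => w k * (gamma0 * pw (- a) k)) (S N))).
  by move=> N; right; apply: eq_sumR => k _; rewrite step_sizeE.
by apply: negligible_weighted_cesaro; lra.
Qed.

Lemma negligible_weighted_lams : negligible W (fun N => sumR (fun k => w k * lam k) (S N)).
Proof.
apply: (negligible_le (Q := fun N => sumR (fun k => w k * (lambda0 * pw (- b) k)) (S N))).
  by move=> N; right; apply: eq_sumR => k _; rewrite step_sizeE.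
by apply: negligible_weighted_cesaro; lra.
Qed.

Lemma negligible_weighted_ratios :
  negligible W (fun N => sumR (fun k => w k * (gam k / lam k)) (S N)).
Proof.
apply: (negligible_le (Q := fun N =>
    sumR (fun k => w k * (gamma0 / lambda0 * pw (b - a) k)) (S N))).
  move=> N; right; apply: eq_sumR => k _; rewrite !step_sizeE.
  have -> : b - a = - a + - - b by ring.
  rewrite pwD (pwN (- b)); have := pw_pos (- b) k => ?.
  by field; split; lra.
by apply: negligible_weighted_cesaro; [apply: Rdiv_lt_0_compat | lra].
Qed.
End PowerSteps.

(** * The IR-IG iteration *)

Lemma proj_subgrad_step n (X : vec n -> Prop) (F1 F2 : vec n -> R) z g1 g2 t c p y :
  convex_set X -> X y -> 0 <= t -> 0 <= c ->
  subgrad F1 z g1 -> subgrad F2 z g2 ->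
  is_proj X (vsub z (vscale t (vadd g1 (vscale c g2)))) p ->
  sqnorm (vsub p y) <= sqnorm (vsub z y) - 2 * t * (F1 z - F1 y) - 2 * t * c * (F2 z - F2 y)
                       + t ^ 2 * sqnorm (vadd g1 (vscale c g2)).
Proof.
move=> HX Xy t0 c0 H1 H2 Hp; apply: Rle_trans (proj_nonexpansive HX Hp Xy) _.
have -> : vsub (vsub z (vscale t (vadd g1 (vscale c g2)))) y =
          vsub (vsub z y) (vscale t (vadd g1 (vscale c g2))).
  by apply: functional_extensionality => j; rewrite /vsub; ring.
have flip g : dot g (vsub y z) = - dot (vsub z y) g by rewrite dotBr dotBl (dotC g y) (dotC g z); ring.
have := H1 y; have := H2 y; rewrite !flip sqnormB sqnormZ dotZr dotDr dotZr.
have := Rmult_le_pos _ _ t0 c0; nra.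
Qed.

Lemma sqnorm_path_le n (v : nat -> vec n) s i :
  (forall j, (j < i)%nat -> sqnorm (vsub (v (S j)) (v j)) <= s) ->
  sqnorm (vsub (v i) (v 0%nat)) <= INR i ^ 2 * s.
Proof.
elim: i => [|i IH] Hs.
  have -> : vsub (v 0%nat) (v 0%nat) = vscale 0 (v 0%nat).
    by apply: functional_extensionality => j; rewrite /vsub /vscale; ring.
  by rewrite sqnormZ /=; lra.
have IH' := IH (fun j ji => Hs j (ltn_trans ji (ltnSn i))).
have step := Hs i (ltnSn i).
case: (posnP i) => [i0 | i0].
  by move: step; rewrite i0 /=; lra.
have ip : 0 < INR i by apply/lt_0_INR/ltP.
have -> : vsub (v i.+1) (v 0%nat) = vadd (vsub (v i.+1) (v i)) (vsub (v i) (v 0%nat)).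
  by apply: functional_extensionality => j; rewrite /vsub /vadd; ring.
apply: Rle_trans (sqnormD_le _ _ ip) _.
have := Rmult_le_compat_l (1 + INR i) _ _ ltac:(lra) step.
have := Rmult_le_compat_l (1 + / INR i) _ _ ltac:(have := Rinv_0_lt_compat _ ip; lra) IH'.
have -> : (1 + / INR i) * (INR i ^ 2 * s) = (INR i + 1) * INR i * s by field; lra.
rewrite S_INR; nra.
Qed.

Lemma amgm_scaled g G t Q : 0 < g -> t ^ 2 <= g ^ 2 * Q -> G * t <= g * (G ^ 2 + Q) / 2.
Proof.
move=> g0 tQ; apply: (Rmult_le_reg_l g) => //.
have := pow2_ge_0 (g * G - t); nra.
Qed.

Section IRIG.
Variables (n m : nat) (X : vec n -> Prop) (fs : nat -> vec n -> R) (h : vec n -> R).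
Variables (gam lam : nat -> R) (gam0 lam0 : R) (x gf gh : nat -> nat -> vec n).
Hypothesis m_pos : (0 < m)%nat.
Hypothesis X_convex : convex_set X.
Hypothesis X_compact : compact_set X.
Hypothesis fs_convex : forall i, (i < m)%nat -> convex_fun (fs i).
Hypothesis h_convex : convex_fun h.
Hypothesis gam_bounds : forall k, 0 < gam k <= gam0.
Hypothesis lam_bounds : forall k, 0 < lam k <= lam0.
Hypothesis x_init : X (x 0%nat 0%nat).
Hypothesis x_next : forall k, x (S k) 0%nat = x k m.
Hypothesis x_step : forall k i, (i < m)%nat ->
  subgrad (fs i) (x k i) (gf k i) /\ subgrad h (x k i) (gh k i) /\
  is_proj X (vsub (x k i) (vscale (gam k) (vadd (gf k i) (vscale (lam k / INR m) (gh k i)))))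
    (x k (S i)).

Lemma INR_m_pos : 0 < INR m.
Proof. exact/lt_0_INR/ltP. Qed.

Lemma iterate_in_X k i : (i <= m)%nat -> X (x k i).
Proof.
elim: k i => [|k IHk]; elim=> [|i IHi] im //.
- exact: (proj2 (proj2 (x_step 0 im))).1.
- by rewrite x_next; apply: IHk.
- exact: (proj2 (proj2 (x_step k.+1 im))).1.
Qed.

Lemma irig_uniform_bounds : exists G, 0 <= G /\
  (forall k i, (i < m)%nat -> sqnorm (gf k i) <= G /\ sqnorm (gh k i) <= G) /\
  (forall i, (i < m)%nat -> forall u v, X u -> X v -> fs i v - fs i u <= G * norm (vsub v u)) /\
  (forall u v, X u -> X v -> h v - h u <= G * norm (vsub v u)).
Proof.
pose P F G := (forall y g, X y -> subgrad F y g -> sqnorm g <= G) /\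
  (forall u v, X u -> X v -> F v - F u <= G * norm (vsub v u)).
have P_mono F G G' : G <= G' -> P F G -> P F G'.
  move=> GG' [Hg HL]; split=> [y g Xy Hy | u v Xu Xv]; first exact: Rle_trans (Hg y g Xy Hy) GG'.
  exact/(Rle_trans _ _ _ (HL u v Xu Xv))/Rmult_le_compat_r/GG'/norm_ge0.
have [Gf [Gf0 HGf]] : exists G, 0 <= G /\ forall i, (i < m)%nat -> P (fs i) G.
  apply: (exists_common_bound (P := fun i => P (fs i))) => [i G G' | i im].
    exact: P_mono.
  have [Xi _] := x_step 0 im.
  have [G [_ HG]] := convex_regular_on_compact X_compact (iterate_in_X 0 (ltnW im)) (fs_convex im) Xi.
  by exists G.
have [Gh [_ HGh]] := convex_regular_on_compact X_compact x_init h_convex (proj1 (proj2 (x_step 0 m_pos))).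
exists (Rmax Gf Gh); split; first exact: Rle_trans Gf0 (Rmax_l _ _).
have [Gh_sub Gh_lip] := P_mono h _ _ (Rmax_r Gf Gh) HGh.
split.
  move=> k i im; have [Hf [Hh _]] := x_step k im; have Xk := iterate_in_X k (ltnW im).
  have [Gf_sub _] := P_mono _ _ _ (Rmax_l Gf Gh) (HGf i im).
  by split; [apply: Gf_sub Hf | apply: Gh_sub Hh].
split=> // i im.
by have [_ Gf_lip] := P_mono _ _ _ (Rmax_l Gf Gh) (HGf i im); apply: Gf_lip.
Qed.

Section Epoch.
Variables (G : R) (k : nat).
Hypothesis G_ge0 : 0 <= G.
Hypothesis subgrad_le : forall i, (i < m)%nat -> sqnorm (gf k i) <= G /\ sqnorm (gh k i) <= G.
Hypothesis fs_lipschitz :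
  forall i, (i < m)%nat -> forall u v, X u -> X v -> fs i v - fs i u <= G * norm (vsub v u).
Hypothesis h_lipschitz : forall u v, X u -> X v -> h v - h u <= G * norm (vsub v u).

(* E bounds the squared length of a search direction, gam k * Q / 2 the error made by
   evaluating f_i and h at x k i instead of x k 0, and gam k ^ 2 * C1 the total error of
   one inner step. *)
Local Notation c0 := (lam0 / INR m).
Local Notation E := (2 * G + 2 * (c0 ^ 2 * G)).
Local Notation Q := (G ^ 2 + INR m ^ 2 * E).
Local Notation C1 := (E + (1 + c0) * Q).

Lemma lam_max_ratio_pos : 0 < c0.
Proof. by have [l0 l1] := lam_bounds 0%nat; apply: Rdiv_lt_0_compat; [lra | exact: INR_m_pos]. Qed.

Lemma direction_bound_ge0 : 0 <= E.
Proof. by have := pow2_ge_0 c0; nra. Qed.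

Lemma drift_bound_ge0 : 0 <= Q.
Proof.
have := Rmult_le_pos _ _ (pow2_ge_0 (INR m)) direction_bound_ge0.
by have := pow2_ge_0 G; lra.
Qed.

Lemma epoch_bound_ge0 : 0 <= INR m * C1.
Proof.
apply: Rmult_le_pos; first exact: pos_INR.
have := direction_bound_ge0; have := drift_bound_ge0; have := lam_max_ratio_pos; nra.
Qed.

Lemma lam_ratio_bounds : 0 < lam k / INR m <= c0.
Proof.
have m0 := INR_m_pos; have [l0 l1] := lam_bounds k; split; first exact: Rdiv_lt_0_compat.
by apply: Rmult_le_compat_r => //; apply/Rlt_le/Rinv_0_lt_compat.
Qed.

Lemma direction_sqnorm_le i : (i < m)%nat ->
  sqnorm (vadd (gf k i) (vscale (lam k / INR m) (gh k i))) <= E.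
Proof.
move=> im; have [Hf Hh] := subgrad_le im; have [c_pos c_le] := lam_ratio_bounds.
apply: Rle_trans (sqnormD_le _ _ Rlt_0_1) _; rewrite sqnormZ Rinv_1.
have : (lam k / INR m) ^ 2 <= c0 ^ 2 by apply: pow_incr; lra.
have := sqnorm_ge0 (gh k i); have := pow2_ge_0 (lam k / INR m); nra.
Qed.

Lemma inner_step_sqnorm_le i : (i < m)%nat ->
  sqnorm (vsub (x k (S i)) (x k i)) <= gam k ^ 2 * E.
Proof.
move=> im; have [_ [_ Hp]] := x_step k im.
apply: Rle_trans (proj_nonexpansive X_convex Hp (iterate_in_X k (ltnW im))) _.
have -> : vsub (vsub (x k i) (vscale (gam k) (vadd (gf k i) (vscale (lam k / INR m) (gh k i)))))
            (x k i) = vscale (- gam k) (vadd (gf k i) (vscale (lam k / INR m) (gh k i))).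
  by apply: functional_extensionality => j; rewrite /vsub /vscale; ring.
rewrite sqnormZ (_ : (- gam k) ^ 2 = gam k ^ 2); last ring.
by apply: Rmult_le_compat_l; [apply: pow2_ge_0 | apply: direction_sqnorm_le].
Qed.

Lemma lipschitz_drift_lower F i : (i <= m)%nat ->
  (forall u v, X u -> X v -> F v - F u <= G * norm (vsub v u)) ->
  F (x k 0%nat) - gam k * Q / 2 <= F (x k i).
Proof.
move=> im HF; have [g0 _] := gam_bounds k.
have := HF _ _ (iterate_in_X k im) (iterate_in_X k (leq0n m)).
suff : G * norm (vsub (x k 0%nat) (x k i)) <= gam k * Q / 2 by lra.
apply: amgm_scaled => //; rewrite norm_sqr sqnormBC.
apply: Rle_trans (sqnorm_path_le (v := x k) (fun j ji => inner_step_sqnorm_le (leq_trans ji im))) _.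
have : INR i ^ 2 <= INR m ^ 2.
  by apply: pow_incr; split; [apply: pos_INR | apply/le_INR/leP].
have := Rmult_le_pos _ _ (pow2_ge_0 (gam k)) direction_bound_ge0.
nra.
Qed.

Lemma inner_descent y i : X y -> (i < m)%nat ->
  sqnorm (vsub (x k (S i)) y) <= sqnorm (vsub (x k i) y)
    - 2 * gam k * (fs i (x k 0%nat) - fs i y)
    - 2 * gam k * (lam k / INR m) * (h (x k 0%nat) - h y) + gam k ^ 2 * C1.
Proof.
move=> Xy im; have [Hf [Hh Hp]] := x_step k im; have [g0 _] := gam_bounds k.
have [c_pos c_le] := lam_ratio_bounds.
have := proj_subgrad_step X_convex Xy (Rlt_le _ _ g0) (Rlt_le _ _ c_pos) Hf Hh Hp.
have fs_low := lipschitz_drift_lower (ltnW im) (fs_lipschitz im).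
have h_low := lipschitz_drift_lower (ltnW im) h_lipschitz.
have Q0 := drift_bound_ge0.
have := Rmult_le_compat_l _ _ _ (ltac:(lra) : 0 <= 2 * gam k) fs_low.
have := Rmult_le_compat_l _ _ _ (ltac:(nra) : 0 <= 2 * gam k * (lam k / INR m)) h_low.
have := Rmult_le_compat_l _ _ _ (pow2_ge_0 (gam k)) (direction_sqnorm_le im).
have : gam k ^ 2 * (lam k / INR m) * Q <= gam k ^ 2 * c0 * Q.
  by apply: Rmult_le_compat_r => //; apply: Rmult_le_compat_l => //; apply: pow2_ge_0.
lra.
Qed.

Lemma epoch_descent_le y : X y ->
  sqnorm (vsub (x (S k) 0%nat) y) <= sqnorm (vsub (x k 0%nat) y)
    - 2 * gam k * (fsum m fs (x k 0%nat) - fsum m fs y)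
    - 2 * gam k * lam k * (h (x k 0%nat) - h y) + INR m * C1 * gam k ^ 2.
Proof.
move=> Xy.
have partial i : (i <= m)%nat -> sqnorm (vsub (x k i) y) <= sqnorm (vsub (x k 0%nat) y)
    - 2 * gam k * sumR (fun j => fs j (x k 0%nat) - fs j y) i
    - 2 * gam k * (lam k / INR m) * INR i * (h (x k 0%nat) - h y) + INR i * (gam k ^ 2 * C1).
  elim: i => [_|i IH im]; first by rewrite sumR0 /=; lra.
  have := IH (ltnW im); have := inner_descent Xy im.
  by rewrite sumRS S_INR; lra.
have := partial m (leqnn m); rewrite -x_next sumRB.
have -> : 2 * gam k * (lam k / INR m) * INR m = 2 * gam k * lam k.
  by have ? := INR_m_pos; field; lra.
rewrite !fsumE; lra.
Qed.

End Epoch.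

Lemma epoch_descent : exists C, 0 <= C /\ forall k y, X y ->
  sqnorm (vsub (x (S k) 0%nat) y) <= sqnorm (vsub (x k 0%nat) y)
    - 2 * gam k * (fsum m fs (x k 0%nat) - fsum m fs y)
    - 2 * gam k * lam k * (h (x k 0%nat) - h y) + C * gam k ^ 2.
Proof.
have [G [G0 [Hsub [Hf Hh]]]] := irig_uniform_bounds.
eexists; split; [|move=> k y Xy; exact: (epoch_descent_le G0 (Hsub k) Hf Hh Xy)].
exact: epoch_bound_ge0.
Qed.

End IRIG.

Lemma sumR_telescope_le (c u : nat -> R) D N : (forall k, 0 <= c k) ->
  (forall k, c k <= c (S k)) -> (forall k, 0 <= u k <= D) ->
  sumR (fun k => c k * (u k - u (S k))) (S N) <= c N * D.
Proof.
move=> c0 cS uD.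
suff : sumR (fun k => c k * (u k - u (S k))) (S N) <= c N * D - c N * u (S N).
  by have := c0 N; have := uD (S N); nra.
elim: N => [|N IH].
  by rewrite sumRS sumR0; have := c0 0%nat; have := uD 0%nat; nra.
by rewrite sumRS; have := cS N; have := c0 N; have := uD (S N); have := uD (S (S N)); nra.
Qed.

Section WeightedDescent.
Variables (u gam lam w Phi Psi : nat -> R) (B C D : R).
Hypothesis u_bounds : forall k, 0 <= u k <= D.
Hypothesis descent : forall k,
  u (S k) <= u k - 2 * gam k * Phi k - 2 * gam k * lam k * Psi k + C * gam k ^ 2.
Hypotheses (gam_pos : forall k, 0 < gam k) (lam_pos : forall k, 0 < lam k).
Hypothesis w_pos : forall k, 0 < w k.
Hypotheses (Phi_ge0 : forall k, 0 <= Phi k) (Psi_ge : forall k, - B <= Psi k).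

Lemma weighted_sum_Phi_le N : (forall k, w k / gam k <= w (S k) / gam (S k)) ->
  sumR (fun k => w k * Phi k) (S N) <= D / 2 * (w N / gam N)
    + B * sumR (fun k => w k * lam k) (S N) + C / 2 * sumR (fun k => w k * gam k) (S N).
Proof.
move=> mono.
have term k : w k * Phi k <= / 2 * (w k / gam k) * (u k - u (S k))
    + B * (w k * lam k) + C / 2 * (w k * gam k).
  have g0 := gam_pos k; have l0 := lam_pos k; have := descent k; have := Psi_ge k.
  have q0 : 0 < / 2 * (w k / gam k).
    by apply: Rmult_lt_0_compat; [lra | apply: Rdiv_lt_0_compat].
  have -> : w k * Phi k = / 2 * (w k / gam k) * (2 * gam k * Phi k) by field; lra.
  have -> : B * (w k * lam k) = / 2 * (w k / gam k) * (2 * gam k * lam k * B) by field; lra.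
  have -> : C / 2 * (w k * gam k) = / 2 * (w k / gam k) * (C * gam k ^ 2) by field; lra.
  move=> PsiB desc; have := Rmult_le_compat_r _ _ _ (ltac:(nra) : 0 <= 2 * gam k * lam k) PsiB.
  move=> H; apply: Rle_trans (Rmult_le_compat_l _ (2 * gam k * Phi k)
    (u k - u (S k) + 2 * gam k * lam k * B + C * gam k ^ 2) (Rlt_le _ _ q0) ltac:(lra)) _.
  by right; ring.
apply: Rle_trans (sumR_le (fun k _ => term k)) _.
rewrite !sumRD !sumRZ.
have c0 k : 0 <= / 2 * (w k / gam k).
  by apply: Rmult_le_pos; [lra | apply/Rlt_le/Rdiv_lt_0_compat].
have cS k : / 2 * (w k / gam k) <= / 2 * (w (S k) / gam (S k)).
  by apply: Rmult_le_compat_l; [lra | apply: mono].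
have := sumR_telescope_le N c0 cS u_bounds; lra.
Qed.

Lemma weighted_sum_Psi_le N :
  (forall k, w k / (gam k * lam k) <= w (S k) / (gam (S k) * lam (S k))) ->
  sumR (fun k => w k * Psi k) (S N) <= D / 2 * (w N / (gam N * lam N))
    + C / 2 * sumR (fun k => w k * (gam k / lam k)) (S N).
Proof.
move=> mono.
have term k : w k * Psi k <= / 2 * (w k / (gam k * lam k)) * (u k - u (S k))
    + C / 2 * (w k * (gam k / lam k)).
  have g0 := gam_pos k; have l0 := lam_pos k; have := descent k; have := Phi_ge0 k.
  have gl0 : 0 < gam k * lam k by nra.
  have q0 : 0 < / 2 * (w k / (gam k * lam k)).
    by apply: Rmult_lt_0_compat; [lra | apply: Rdiv_lt_0_compat].
  have -> : w k * Psi k = / 2 * (w k / (gam k * lam k)) * (2 * gam k * lam k * Psi k).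
    by field; lra.
  have -> : C / 2 * (w k * (gam k / lam k)) = / 2 * (w k / (gam k * lam k)) * (C * gam k ^ 2).
    by field; lra.
  move=> Phi0 desc; have := Rmult_le_pos _ _ (ltac:(lra) : 0 <= 2 * gam k) Phi0.
  move=> H; apply: Rle_trans (Rmult_le_compat_l _ (2 * gam k * lam k * Psi k)
    (u k - u (S k) + C * gam k ^ 2) (Rlt_le _ _ q0) ltac:(lra)) _.
  by right; ring.
apply: Rle_trans (sumR_le (fun k _ => term k)) _.
rewrite !sumRD !sumRZ.
have c0 k : 0 <= / 2 * (w k / (gam k * lam k)).
  apply: Rmult_le_pos; first lra.
  by apply/Rlt_le/Rdiv_lt_0_compat; [|apply: Rmult_lt_0_compat].
have cS k : / 2 * (w k / (gam k * lam k)) <= / 2 * (w (S k) / (gam (S k) * lam (S k))).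
  by apply: Rmult_le_compat_l; [lra | apply: mono].
have := sumR_telescope_le N c0 cS u_bounds; lra.
Qed.

End WeightedDescent.

Lemma wavg_gap_vanish n (F : vec n -> R) (w : nat -> R) (xs : nat -> vec n) c :
  convex_fun F -> (forall k, 0 < w k) ->
  negligible (fun N => sumR w (S N)) (fun N => sumR (fun k => w k * (F (xs k) - c)) (S N)) ->
  forall e, 0 < e -> eventually (fun N => F (wavg w xs (S N)) <= c + e).
Proof.
move=> HF w0 Hneg e e0; have [N0 HN0] := Hneg e e0.
exists N0 => N NN; have W0 := sumR_gt0 N w0.
have := jensen_wavg xs w0 N HF; have := HN0 N NN.
have -> : sumR (fun k => w k * (F (xs k) - c)) (S N) =
          sumR (fun k => w k * F (xs k)) (S N) - c * sumR w (S N).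
  by rewrite -sumRZ -sumRB; apply: eq_sumR => k _; ring.
move=> H1 H2; apply: (Rmult_le_reg_r (sumR w (S N))) => //; lra.
Qed.

Section PowerIRIG.
Variables (n m : nat) (X : vec n -> Prop) (fs : nat -> vec n -> R) (h : vec n -> R) (xh : vec n).
Variables (a b gamma0 lambda0 r : R) (x gf gh : nat -> nat -> vec n).
Hypotheses (m_pos : (0 < m)%nat) (X_convex : convex_set X) (X_compact : compact_set X).
Hypotheses (fs_convex : forall i, (i < m)%nat -> convex_fun (fs i)) (h_convex : convex_fun h).
Hypothesis xh_argmin : argmin (fsum m fs) X xh.
Hypotheses (a_pos : 0 < a) (b_pos : 0 < b) (gamma0_pos : 0 < gamma0) (lambda0_pos : 0 < lambda0).
Hypotheses (r_lt1 : r < 1) (b_lt_a : b < a) (ab_lt1 : a + b < 1) (ar_le1 : a * r <= 1).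
Hypotheses (x_init : X (x 0%nat 0%nat)) (x_next : forall k, x (S k) 0%nat = x k m).
Hypothesis x_step : forall k i, (i < m)%nat ->
  subgrad (fs i) (x k i) (gf k i) /\ subgrad h (x k i) (gh k i) /\
  is_proj X (vsub (x k i) (vscale (step_size gamma0 a k)
      (vadd (gf k i) (vscale (step_size lambda0 b k / INR m) (gh k i))))) (x k (S i)).

Local Notation w := (step_weight gamma0 a r).
Local Notation W := (fun N => sumR w (S N)).

Lemma irig_weighted_gaps_negligible :
  negligible W (fun N => sumR (fun k => w k * (fsum m fs (x k 0%nat) - fsum m fs xh)) (S N)) /\
  negligible W (fun N => sumR (fun k => w k * (h (x k 0%nat) - h xh)) (S N)).
Proof.
have gam_b k := step_size_bounds k gamma0_pos (Rlt_le _ _ a_pos).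
have lam_b k := step_size_bounds k lambda0_pos (Rlt_le _ _ b_pos).
have gam_pos k := proj1 (gam_b k); have lam_pos k := proj1 (lam_b k).
have [C [C0 descent]] :=
  epoch_descent m_pos X_convex X_compact fs_convex h_convex gam_b lam_b x_init x_next x_step.
have Xk k : X (x k 0%nat) := iterate_in_X x_init x_next x_step k (leq0n m).
have [Xxh xh_min] := xh_argmin.
have [D [D0 XD]] := compact_sqdiam X_compact x_init.
have [L hL] := subgrad_lower_bound (proj1 (proj2 (x_step 0 m_pos))) (fun y Xy => XD y _ Xy x_init).
have u_bounds k : 0 <= sqnorm (vsub (x k 0%nat) xh) <= D by split; [apply: sqnorm_ge0 | apply: XD].
have desc k := descent k xh Xxh.
have W0 N : 0 <= W N by apply/Rlt_le/sumR_gt0/step_weight_pos.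
split.
- apply: negligible_le => [N|].
    apply: (weighted_sum_Phi_le (B := h xh - L) u_bounds desc gam_pos lam_pos (step_weight_pos a gamma0 r)).
      by move=> k; have := hL _ (Xk k); lra.
    exact: step_weight_div_step_le.
  have LB : 0 <= h xh - L by have := hL _ Xxh; lra.
  apply: negligibleD; first apply: negligibleD.
  + by apply: (negligibleZ W0); [lra | exact: (negligible_step_weight_div_step (b := b))].
  + by apply: (negligibleZ W0 LB); exact: negligible_weighted_lams.
  + by apply: (negligibleZ W0); [lra | exact: negligible_weighted_steps].
- apply: negligible_le => [N|].
    apply: (weighted_sum_Psi_le u_bounds desc gam_pos lam_pos (step_weight_pos a gamma0 r)).
      by move=> k; have := xh_min _ (Xk k); lra.
    exact: step_weight_div_steps_le.
  apply: negligibleD.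
  + by apply: (negligibleZ W0); [lra | exact: negligible_step_weight_div_steps].
  + by apply: (negligibleZ W0); [lra | exact: negligible_weighted_ratios].
Qed.

End PowerIRIG.

Theorem theorem1
  (n m : nat) (X : vec n -> Prop) (fs : nat -> vec n -> R) (h : vec n -> R)
  (mu_h : R) (xh : vec n)
  (a b gamma0 lambda0 r : R)
  (x : nat -> nat -> vec n) (gf gh : nat -> nat -> vec n) :
  (0 < m)%nat ->
  (exists z, X z) -> convex_set X -> compact_set X ->
  (forall i, (i < m)%nat -> convex_fun (fs i)) ->
  0 < mu_h -> strongly_convex mu_h h ->
  argmin (fsum m fs) X xh ->
  (forall y, argmin (fsum m fs) X y -> h xh <= h y) ->
  0 < a -> 0 < b -> 0 < gamma0 -> 0 < lambda0 ->
  gamma0 * lambda0 <= 2 * INR m / mu_h ->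
  r < 1 ->
  a > b -> a > 1/2 -> a + b < 1 -> a * r <= 1 ->
  X (x 0%nat 0%nat) ->
  (forall k, x (S k) 0%nat = x k m) ->
  (forall k i, (i < m)%nat ->
     subgrad (fs i) (x k i) (gf k i) /\ subgrad h (x k i) (gh k i) /\
     is_proj X
       (vsub (x k i)
          (vscale (gamma0 / Rpower (INR (k + 1)) a)
             (vadd (gf k i)
                (vscale ((lambda0 / Rpower (INR (k + 1)) b) / INR m) (gh k i)))))
       (x k (S i))) ->
  seq_conv
    (fun N => wavg (fun k => Rpower (gamma0 / Rpower (INR (k + 1)) a) r)
                   (fun k => x k 0%nat) (S N))
    xh.
Proof.
(* Nonemptiness of X, gamma0 * lambda0 <= 2m/mu_h and a > 1/2 are only needed for the
   non-averaged iterates. *)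
move=> m_pos _ X_convex X_compact fs_convex mu_pos h_strong xh_argmin xh_best a_pos b_pos
  gamma0_pos lambda0_pos _ r_lt1 b_lt_a _ ab_lt1 ar_le1 x_init x_next x_step.
have h_convex := strongly_convex_convex mu_pos h_strong.
have f_convex := fsum_convex fs_convex.
have [f_gaps h_gaps] := irig_weighted_gaps_negligible m_pos X_convex X_compact fs_convex
  h_convex xh_argmin a_pos b_pos gamma0_pos lambda0_pos r_lt1 b_lt_a ab_lt1 ar_le1
  x_init x_next x_step.
have w_pos := step_weight_pos a gamma0 r.
have f_vanish := wavg_gap_vanish f_convex w_pos f_gaps.
have h_vanish := wavg_gap_vanish h_convex w_pos h_gaps.
apply: (compact_unique_cluster X_compact) => [N | s z sN Xz conv].
  by apply: wavg_in_convex => // k; apply: (iterate_in_X x_init x_next x_step).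
have fz : fsum m fs z <= fsum m fs xh.
  exact: (convex_limit_le f_convex conv (fun e e0 => eventually_subseq sN (f_vanish e e0))).
have hz : h z <= h xh.
  exact: (convex_limit_le h_convex conv (fun e e0 => eventually_subseq sN (h_vanish e e0))).
apply: (strongly_convex_argmin_unique X_convex f_convex mu_pos h_strong _ xh_argmin xh_best hz).
by split=> // y Xy; have := proj2 xh_argmin y Xy; lra.
Qed.
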